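(* Let $\tilde{\mathfrak g}$ be a real solvable Lie algebra with a metric $\langle,\rangle$ and a standard decomposition $\tilde{\mathfrak g}=\mathfrak g\oplus^\perp\mathfrak a$. Let $e_1,\dots,e_k$ be an orthonormal basis of $\mathfrak a$, $\langle e_s,e_r\rangle=\epsilon_s\delta_{sr}$ with $\epsilon_s=\pm1$, and let $\phi_s\in\operatorname{Der}\mathfrak g$ be defined by $[v,e_s]=\phi_s(v)$ for $v\in\mathfrak g$, with $\phi_s^*$ its adjoint with respect to the restriction of $\langle,\rangle$ to $\mathfrak g$. Let $\widetilde{\operatorname{ric}}$ be the Ricci tensor of $\tilde{\mathfrak g}$ and $\operatorname{ric}$ the Ricci tensor of $\mathfrak g$ with the restricted metric. Then for all $v,w\in\mathfrak g$ and all $s,r$: $\widetilde{\operatorname{ric}}(v,w)=\operatorname{ric}(v,w)+\sum_s\Bigl(\frac12\epsilon_s\langle[\phi_s,\phi_s^*](v),w\rangle-\frac12\epsilon_s\langle(\phi_s+\phi_s^* )(v),w\rangle\operatorname{Tr}\phi_s\Bigr)$, $\widetilde{\operatorname{ric}}(v,e_s)=\frac12\langle\operatorname{ad}v,\phi_s\rangle$, $\widetilde{\operatorname{ric}}(e_s,e_r)=-\frac12\langle\phi_s,\phi_r\rangle-\frac12\operatorname{Tr}(\phi_s\circ\phi_r)$, where $\operatorname{ad}v$ denotes the adjoint action of $v$ on $\mathfrak g$, and for endomorphisms $f,g$ of $\mathfrak g$, $\langle f,g\rangle=\sum_i\eta_i\langle f(u_i),g(u_i)\rangle$ for any orthonormal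 basis $u_i$ of $\mathfrak g$ with $\langle u_i,u_i\rangle=\eta_i=\pm1$.
   Context: A metric on a Lie algebra is a nondegenerate symmetric bilinear form, possibly indefinite; the Ricci tensor is that of the corresponding left-invariant pseudo-Riemannian metric on the simply connected Lie group, evaluated at the identity. A standard decomposition of a metric Lie algebra $\tilde{\mathfrak g}$ is a decomposition $\tilde{\mathfrak g}=\mathfrak g\oplus^\perp\mathfrak a$ as an orthogonal direct sum of vector spaces, where $\mathfrak g$ is a nilpotent ideal and $\mathfrak a$ is an abelian subalgebra. *)

From HB Require Import structures.
From mathcomp Require Import all_boot all_order all_algebra.
From mathcomp Require Import reals.
From Stdlib Require Import ClassicalEpsilon.
Set Implicit Arguments. Unset Strict Implicit. Unset Printing Implicit Defensive.
Import Order.TTheory GRing.Theory Num.Theory.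
Local Open Scope ring_scope.

Section LieMetric.
Variables (R : realType) (V : vectType R).

Definition is_lie_bracket (br : V -> V -> V) : Prop :=
  [/\ (forall (a : R) (x y z : V), br (a *: x + y) z = a *: br x z + br y z),
      (forall x y : V, br x y = - br y x) &
      (forall x y z : V, br x (br y z) + br y (br z x) + br z (br x y) = 0)].

Definition is_metric (gm : V -> V -> R) : Prop :=
  [/\ (forall (a : R) (x y z : V), gm (a *: x + y) z = a * gm x z + gm y z),
      (forall x y : V, gm x y = gm y x) &
      (forall x : V, (forall y : V, gm x y = 0) -> x = 0)].

Definition bracket_span (br : V -> V -> V) (U W : {vspace V}) : {vspace V} :=
  <<[seq br x y | x <- (vbasis U : seq V), y <- (vbasis W : seq V)]>>%VS.

Definition lie_subalgebra (br : V -> V -> V) (U : {vspace V}) : Prop :=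
  forall x y, x \in U -> y \in U -> br x y \in U.

Definition lie_ideal (br : V -> V -> V) (U : {vspace V}) : Prop :=
  forall x y, x \in U -> br x y \in U.

Definition abelian_subalgebra (br : V -> V -> V) (U : {vspace V}) : Prop :=
  forall x y, x \in U -> y \in U -> br x y = 0.

Definition solvable_lie (br : V -> V -> V) (U : {vspace V}) : Prop :=
  exists n, iter n (fun W => bracket_span br W W) U = 0%VS.

Definition nilpotent_lie (br : V -> V -> V) (U : {vspace V}) : Prop :=
  exists n, iter n (fun W => bracket_span br U W) U = 0%VS.

(* Levi-Civita connection of the left-invariant metric on the Lie algebra U
   (bracket and metric restricted to U), via the Koszul formula
   2<nabla_X Y, Z> = <[X,Y],Z> - <[Y,Z],X> + <[Z,X],Y>. *)
Definition lc_nabla (br : V -> V -> V) (gm : V -> V -> R) (U : {vspace V})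
  (X Y : V) : V :=
  epsilon (inhabits (0 : V)) (fun Z => Z \in U /\
    forall W, W \in U ->
      2 * gm Z W = gm (br X Y) W - gm (br Y W) X + gm (br W X) Y).

Definition lc_curv (br : V -> V -> V) (gm : V -> V -> R) (U : {vspace V})
  (X Y Z : V) : V :=
  lc_nabla br gm U X (lc_nabla br gm U Y Z) - lc_nabla br gm U Y (lc_nabla br gm U X Z)
  - lc_nabla br gm U (br X Y) Z.

Definition vtrace (U : {vspace V}) (f : V -> V) : R :=
  \sum_(i < \dim U) coord (vbasis U) i (f (tnth (vbasis U) i)).

Definition ricci (br : V -> V -> V) (gm : V -> V -> R) (U : {vspace V})
  (Y Z : V) : R :=
  vtrace U (fun X => lc_curv br gm U X Y Z).

End LieMetric.

From HB Require Import structures.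
From mathcomp Require Import all_boot all_order all_algebra.
From mathcomp Require Import reals.
From mathcomp Require Import ring lra.
From Stdlib Require Import ClassicalEpsilon.
Import GRing.Theory Num.Theory.
Local Open Scope ring_scope.
Set Implicit Arguments. Unset Strict Implicit.

(** The Levi-Civita connection is computed from the Koszul formula by testing
    against pseudo-orthonormal bases of g and a.  With S_s = (phi_s + phi_s^* )/2,
    the connection of the whole algebra restricted to g is the connection of g
    plus the second fundamental form X, Y |-> - sum_s eps_s <S_s X, Y> e_s, while
    nabla_X e_s = S_s X, nabla_{e_s} X = (phi_s^* - phi_s) X / 2 and
    nabla_{e_s} e_r = 0 (a is abelian).  Tracing the curvature over the joint
    basis gives the three blocks: on g x g this is the Gauss equation; on a x a
    only traces of products of phi_r, phi_s and their adjoints survive; on g x a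
    the terms Tr (ad v) and Tr (phi_s o ad v) vanish because g is nilpotent: ad v
    lowers the lower central series, which the derivation phi_s preserves. *)

Section LinearMaps.
Variables (R : pzRingType) (U W : lmodType R) (f : U -> W).
Hypothesis lin_f : linear f.

Lemma linD x y : f (x + y) = f x + f y.
Proof. exact: (GRing.semilinear_linear lin_f).2. Qed.
Lemma linZ a x : f (a *: x) = a *: f x.
Proof. exact: (scalable_linear lin_f). Qed.
Lemma lin0 : f 0 = 0.
Proof. by rewrite -(scale0r 0) linZ scale0r. Qed.
Lemma linN x : f (- x) = - f x.
Proof. by rewrite -scaleN1r linZ scaleN1r. Qed.
Lemma linB x y : f (x - y) = f x - f y.
Proof. by rewrite linD linN. Qed.
Lemma lin_sum I r (P : pred I) F :
  f (\sum_(i <- r | P i) F i) = \sum_(i <- r | P i) f (F i).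
Proof. exact: (big_morph f linD lin0). Qed.

End LinearMaps.

Section ScalarMaps.
Variables (R : pzRingType) (U : lmodType R) (f : U -> R).
Hypothesis lin_f : scalar f.

Lemma scalD x y : f (x + y) = f x + f y.
Proof. exact: (GRing.semilinear_linear lin_f).2. Qed.
Lemma scalZ a x : f (a *: x) = a * f x.
Proof. exact: (scalable_linear lin_f). Qed.
Lemma scal0 : f 0 = 0.
Proof. by rewrite -(scale0r 0) scalZ mul0r. Qed.
Lemma scalN x : f (- x) = - f x.
Proof. by rewrite -scaleN1r scalZ mulN1r. Qed.
Lemma scalB x y : f (x - y) = f x - f y.
Proof. by rewrite scalD scalN. Qed.
Lemma scal_sum I r (P : pred I) F :
  f (\sum_(i <- r | P i) F i) = \sum_(i <- r | P i) f (F i).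
Proof. exact: (big_morph f scalD scal0). Qed.

End ScalarMaps.

Section Trace.
Variables (R : realType) (V : vectType R).

Lemma vtrace_dual (U : {vspace V}) (I : finType) (b : I -> V) (beta : I -> V -> R)
    (f : V -> V) :
  (forall i, b i \in U) -> (forall i, scalar (beta i)) ->
  (forall x, x \in U -> x = \sum_i beta i x *: b i) ->
  linear f -> (forall x, x \in U -> f x \in U) ->
  vtrace U f = \sum_i beta i (f (b i)).
Proof.
move=> bU lin_beta expand lin_f fU; rewrite /vtrace.
have vbU j : tnth (vbasis U) j \in U by apply/vbasis_mem/mem_tnth.
transitivity (\sum_(j < \dim U) \sum_i
    beta i (tnth (vbasis U) j) * coord (vbasis U) j (f (b i))).
  apply: eq_bigr => j _; rewrite {1}(expand _ (vbU j)) (lin_sum lin_f) linear_sum.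
  by apply: eq_bigr => i _; rewrite (linZ lin_f) linearZ.
rewrite exchange_big /=; apply: eq_bigr => i _.
rewrite {2}(coord_vbasis (fU _ (bU i))) (scal_sum (lin_beta i)).
by apply: eq_bigr => j _; rewrite (scalZ (lin_beta i)) mulrC (tnth_nth 0).
Qed.

Lemma vtrace0 (f : V -> V) : vtrace 0%VS f = 0.
Proof. by rewrite /vtrace big1 // => -[i Hi]; exfalso; move: Hi; rewrite dimv0. Qed.

Lemma vtrace_subv (U W : {vspace V}) (f : V -> V) : (W <= U)%VS -> linear f ->
  (forall x, x \in U -> f x \in W) -> vtrace U f = vtrace W f.
Proof.
move=> sWU lin_f fUW; pose W' := (U :\: W)%VS.
have pi1W w : w \in W -> addv_pi1 U W w = 0.
  move=> wW; have := addv_pi1_pi2 (subvP (addvSr U W) _ wW).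
  by rewrite addv_pi2_id // => /(canRL (addrK w)); rewrite subrr.
have vbW (i : 'I_(\dim W)) : (vbasis W)`_i \in W.
  by apply/vbasis_mem/mem_nth; rewrite size_tuple.
have vbW' (i : 'I_(\dim W')) : (vbasis W')`_i \in W'.
  by apply/vbasis_mem/mem_nth; rewrite size_tuple.
pose b (i : 'I_(\dim W) + 'I_(\dim W')) :=
  match i with inl i => (vbasis W)`_i | inr i => (vbasis W')`_i end.
pose beta i x := match i with
  | inl i => coord (vbasis W) i (addv_pi2 U W x)
  | inr i => coord (vbasis W') i (addv_pi1 U W x) end.
rewrite (@vtrace_dual U _ b beta) //.
- rewrite big_sumType /= [X in _ + X]big1 ?addr0 => [|i _]; last first.
    by rewrite pi1W ?linear0 // fUW // (subvP (diffvSl U W)).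
  apply: eq_bigr => i _.
  by rewrite addv_pi2_id ?(tnth_nth 0) // fUW // (subvP sWU).
- case=> i; [exact: (subvP sWU _ (vbW i)) | exact: (subvP (diffvSl U W) _ (vbW' i))].
- by case=> i c x y /=; rewrite linearP /= linearD linearZ.
- move=> x xU; rewrite big_sumType /=.
  rewrite -{1}(addv_pi1_pi2 (subvP (addvSl U W) _ xU)) addrC; congr (_ + _).
    exact: (coord_vbasis (memv_pi _ _ x)).
  exact: (coord_vbasis (memv_pi2 U W x)).
- by move=> x xU; rewrite (subvP sWU) // fUW.
Qed.

End Trace.

Section MetricLieAlgebra.
Variables (R : realType) (V : vectType R) (br : V -> V -> V) (gm : V -> V -> R).
Hypotheses (lie_br : is_lie_bracket br) (metric_gm : is_metric gm).

Lemma br_linearl y : linear (br^~ y).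
Proof. by case: lie_br => H _ _ a x z; apply: H. Qed.
Lemma brC x y : br x y = - br y x.
Proof. by case: lie_br. Qed.
Lemma br_linearr x : linear (br x).
Proof. by move=> a y z; rewrite brC (br_linearl x) 2!(brC x) scalerN opprD. Qed.
Lemma jacobi x y z : br x (br y z) + br y (br z x) + br z (br x y) = 0.
Proof. by case: lie_br. Qed.
Lemma brxx x : br x x = 0.
Proof.
have : (2%:R : R) *: br x x = 0 by rewrite scaler_nat mulr2n {1}brC addNr.
by move/eqP; rewrite scaler_eq0 pnatr_eq0 /= => /eqP.
Qed.

Lemma brDl x y z : br (x + y) z = br x z + br y z. Proof. exact: (linD (br_linearl z) x y). Qed.
Lemma brDr x y z : br x (y + z) = br x y + br x z. Proof. exact: (linD (br_linearr x) y z). Qed.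
Lemma brBl x y z : br (x - y) z = br x z - br y z. Proof. exact: (linB (br_linearl z) x y). Qed.
Lemma brBr x y z : br x (y - z) = br x y - br x z. Proof. exact: (linB (br_linearr x) y z). Qed.
Lemma brNl x z : br (- x) z = - br x z. Proof. exact: (linN (br_linearl z) x). Qed.
Lemma brNr x z : br x (- z) = - br x z. Proof. exact: (linN (br_linearr x) z). Qed.
Lemma brZl c x z : br (c *: x) z = c *: br x z. Proof. exact: (linZ (br_linearl z) c x). Qed.
Lemma brZr c x z : br x (c *: z) = c *: br x z. Proof. exact: (linZ (br_linearr x) c z). Qed.
Lemma br_suml I r (P : pred I) F z :
  br (\sum_(i <- r | P i) F i) z = \sum_(i <- r | P i) br (F i) z.
Proof. exact: (lin_sum (br_linearl z)). Qed.
Lemma br_sumr I r (P : pred I) F x :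
  br x (\sum_(i <- r | P i) F i) = \sum_(i <- r | P i) br x (F i).
Proof. exact: (lin_sum (br_linearr x)). Qed.

Lemma gm_scalarl y : scalar (gm^~ y).
Proof. by case: metric_gm => H _ _ a x z; apply: H. Qed.
Lemma gmC x y : gm x y = gm y x.
Proof. by case: metric_gm. Qed.
Lemma gm_scalarr x : scalar (gm x).
Proof. by move=> a y z; rewrite gmC (gm_scalarl x) 2!(gmC x). Qed.

Lemma gmDl x y z : gm (x + y) z = gm x z + gm y z. Proof. exact: (scalD (gm_scalarl z) x y). Qed.
Lemma gmDr x y z : gm x (y + z) = gm x y + gm x z. Proof. exact: (scalD (gm_scalarr x) y z). Qed.
Lemma gmBl x y z : gm (x - y) z = gm x z - gm y z. Proof. exact: (scalB (gm_scalarl z) x y). Qed.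
Lemma gmBr x y z : gm x (y - z) = gm x y - gm x z. Proof. exact: (scalB (gm_scalarr x) y z). Qed.
Lemma gmNl x z : gm (- x) z = - gm x z. Proof. exact: (scalN (gm_scalarl z) x). Qed.
Lemma gmNr x z : gm x (- z) = - gm x z. Proof. exact: (scalN (gm_scalarr x) z). Qed.
Lemma gmZl c x z : gm (c *: x) z = c * gm x z. Proof. exact: (scalZ (gm_scalarl z) c x). Qed.
Lemma gmZr c x z : gm x (c *: z) = c * gm x z. Proof. exact: (scalZ (gm_scalarr x) c z). Qed.
Lemma gm0l z : gm 0 z = 0. Proof. exact: (scal0 (gm_scalarl z)). Qed.
Lemma gm_suml I r (P : pred I) F z :
  gm (\sum_(i <- r | P i) F i) z = \sum_(i <- r | P i) gm (F i) z.
Proof. exact: (scal_sum (gm_scalarl z)). Qed.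
Lemma gm_sumr I r (P : pred I) F x :
  gm x (\sum_(i <- r | P i) F i) = \sum_(i <- r | P i) gm x (F i).
Proof. exact: (scal_sum (gm_scalarr x)). Qed.

Definition koszul X Y W := gm (br X Y) W - gm (br Y W) X + gm (br W X) Y.

Lemma koszul_scalarl Y W : scalar (fun X => koszul X Y W).
Proof.
move=> c X X'; rewrite /koszul /= brDl brZl brDr brZr !(gmDl, gmZl, gmDr, gmZr).
ring.
Qed.
Lemma koszul_scalarm X W : scalar (koszul X ^~ W).
Proof.
move=> c Y Y'; rewrite /koszul /= brDl brZl brDr brZr !(gmDl, gmZl, gmDr, gmZr).
ring.
Qed.
Lemma koszul_scalarr X Y : scalar (koszul X Y).
Proof.
move=> c W W'; rewrite /koszul /= brDl brZl brDr brZr !(gmDl, gmZl, gmDr, gmZr).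
ring.
Qed.
Lemma koszul_diag X Y : koszul X Y X = 2 * gm (br X Y) X.
Proof. by rewrite /koszul /= brxx gm0l (brC Y) gmNl opprK addr0 mulr2n mulrDl mul1r. Qed.

(* All that is used of a pseudo-orthonormal basis b of U with <b_i, b_i> = sg_i = +-1. *)
Definition onb_expansion (U : {vspace V}) (I : finType) (b : I -> V) (sg : I -> R) :=
  (forall i, b i \in U) /\ (forall x, x \in U -> x = \sum_i (sg i * gm x (b i)) *: b i).

Lemma onb_expansion_basis (U : {vspace V}) n (X : n.-tuple V) (sg : 'I_n -> R) :
  basis_of U X -> (forall i, sg i = 1 \/ sg i = -1) ->
  (forall i j, gm (tnth X i) (tnth X j) = if i == j then sg i else 0) ->
  onb_expansion U (tnth X) sg.
Proof.
move=> basisX sg_sign gramX; split=> [i|x xU]; first exact/(basis_mem basisX)/mem_tnth.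
have xE : x = \sum_j coord X j x *: tnth X j.
  by rewrite {1}(coord_basis basisX xU); apply: eq_bigr => j _; rewrite (tnth_nth 0).
rewrite {1}xE; apply: eq_bigr => i _; congr (_ *: _).
rewrite {2}xE gm_suml (bigD1 i) //= big1 => [|j ji]; last by rewrite gmZl gramX (negPf ji) mulr0.
rewrite gmZl gramX eqxx addr0 mulrCA.
by case: (sg_sign i) => ->; rewrite ?mulrNN !mulr1.
Qed.

Definition fam_sum (I J : Type) (T : Type) (f : I -> T) (h : J -> T) (i : I + J) :=
  match i with inl i => f i | inr j => h j end.

Lemma onb_expansion_addv (U W : {vspace V}) (I J : finType)
    (b : I -> V) (sg : I -> R) (c : J -> V) (tau : J -> R) :
  onb_expansion U b sg -> onb_expansion W c tau ->
  (forall x y, x \in U -> y \in W -> gm x y = 0) ->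
  onb_expansion (U + W) (fam_sum b c) (fam_sum sg tau).
Proof.
move=> [bU bE] [cW cE] UW; split=> [[i|j] /=|_ /memv_addP [x xU [y yW ->]]].
- exact/(subvP (addvSl U W))/bU.
- exact/(subvP (addvSr U W))/cW.
rewrite big_sumType /=; congr (_ + _).
  rewrite {1}(bE _ xU); apply: eq_bigr => i _.
  by rewrite gmDl [gm y _]gmC (UW _ _ (bU i) yW) addr0.
rewrite {1}(cE _ yW); apply: eq_bigr => j _.
by rewrite gmDl (UW _ _ xU (cW j)) add0r.
Qed.

Section OrthonormalExpansion.
Variables (U : {vspace V}) (I : finType) (b : I -> V) (sg : I -> R).
Hypothesis onb : onb_expansion U b sg.

Let b_mem i : b i \in U. Proof. by case: onb. Qed.
Let b_expand x : x \in U -> x = \sum_i (sg i * gm x (b i)) *: b i.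
Proof. by case: onb => _; apply. Qed.

Definition onb_trace (f : V -> V) := \sum_i sg i * gm (f (b i)) (b i).
Definition onb_dot (f h : V -> V) := \sum_i sg i * gm (f (b i)) (h (b i)).
Definition onb_adj (f : V -> V) x := \sum_i (sg i * gm (f (b i)) x) *: b i.

Lemma onb_scalar_eq (F G : V -> R) : scalar F -> scalar G ->
  (forall i, F (b i) = G (b i)) -> forall x, x \in U -> F x = G x.
Proof.
move=> lin_F lin_G FG x /b_expand ->.
rewrite (scal_sum lin_F) (scal_sum lin_G); apply: eq_bigr => i _.
by rewrite (scalZ lin_F) (scalZ lin_G) FG.
Qed.

Lemma onb_nondeg x : x \in U -> (forall w, w \in U -> gm x w = 0) -> x = 0.
Proof.
move=> xU x_perp; rewrite (b_expand xU) big1 // => i _.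
by rewrite x_perp // mulr0 scale0r.
Qed.

Lemma onb_parseval x y : y \in U -> \sum_i sg i * gm x (b i) * gm y (b i) = gm x y.
Proof.
move=> /b_expand {2}->; rewrite gm_sumr; apply: eq_bigr => i _.
by rewrite gmZr; ring.
Qed.

Lemma vtrace_onb f : linear f -> (forall x, x \in U -> f x \in U) ->
  vtrace U f = onb_trace f.
Proof.
move=> lin_f fU; apply: (vtrace_dual (beta := fun i x => sg i * gm x (b i))) => //.
by move=> i c x y /=; rewrite gmDl gmZl; ring.
Qed.

Lemma onb_trace_comp (A B : V -> V) : linear A -> (forall x, x \in U -> B x \in U) ->
  onb_trace (fun x => A (B x)) =
  \sum_i \sum_j sg i * sg j * gm (B (b i)) (b j) * gm (A (b j)) (b i).
Proof.
move=> lin_A BU; apply: eq_bigr => i _ /=.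
rewrite {1}(b_expand (BU _ (b_mem i))) (lin_sum lin_A) gm_suml mulr_sumr.
by apply: eq_bigr => j _; rewrite (linZ lin_A) gmZl; ring.
Qed.

Lemma onb_traceC (A B : V -> V) : linear A -> linear B ->
  (forall x, x \in U -> A x \in U) -> (forall x, x \in U -> B x \in U) ->
  onb_trace (fun x => A (B x)) = onb_trace (fun x => B (A x)).
Proof.
move=> lin_A lin_B AU BU; rewrite !onb_trace_comp // exchange_big /=.
by apply: eq_bigr => i _; apply: eq_bigr => j _; ring.
Qed.

Lemma onb_adj_mem f x : onb_adj f x \in U.
Proof. by apply: rpred_sum => i _; apply/rpredZ/b_mem. Qed.

Lemma onb_adj_linear f : linear (onb_adj f).
Proof.
move=> c x y; rewrite /onb_adj scaler_sumr -big_split /=; apply: eq_bigr => i _.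
by rewrite gmDr gmZr scalerA -scalerDl mulrDr mulrCA.
Qed.

Lemma gm_onb_adj f v w : linear f -> v \in U -> gm v (onb_adj f w) = gm (f v) w.
Proof.
move=> lin_f /b_expand vE; rewrite /onb_adj gm_sumr {2}vE (lin_sum lin_f) gm_suml.
by apply: eq_bigr => i _; rewrite gmZr (linZ lin_f) gmZl (gmC v); ring.
Qed.

Lemma onb_adj_unique f h w : (forall v, v \in U -> h v \in U) ->
  (forall v w, v \in U -> w \in U -> gm (f v) w = gm v (h w)) ->
  w \in U -> h w = onb_adj f w.
Proof.
move=> hU h_adj wU; rewrite {1}(b_expand (hU _ wU)); apply: eq_bigr => i _.
by rewrite h_adj // gmC.
Qed.

Lemma onb_sum_br_selfadj (S : V -> V) v : (forall x, x \in U -> S x \in U) ->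
  (forall x y, x \in U -> y \in U -> gm (S x) y = gm x (S y)) ->
  \sum_i sg i * gm (br (S (b i)) (b i)) v = 0.
Proof.
move=> SU S_adj.
set T := \sum_i _; have -> : T =
    \sum_i \sum_j sg i * sg j * gm (S (b i)) (b j) * gm (br (b j) (b i)) v.
  apply: eq_bigr => i _; rewrite {1}(b_expand (SU _ (b_mem i))) br_suml gm_suml.
  by rewrite mulr_sumr; apply: eq_bigr => j _; rewrite brZl gmZl; ring.
(* Swapping the summation indices negates the double sum. *)
set T' := \sum_i _; suff : T' = - T' by lra.
rewrite {1}/T' exchange_big /= -sumrN; apply: eq_bigr => i _.
rewrite -sumrN; apply: eq_bigr => j _.
by rewrite S_adj // (gmC (b j)) (brC (b i)) gmNl; ring.
Qed.

Local Notation nabla := (lc_nabla br gm U).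

Lemma lc_nabla_spec X Y : nabla X Y \in U /\
  forall W, W \in U -> 2 * gm (nabla X Y) W = koszul X Y W.
Proof.
apply: (epsilon_spec (inhabits 0) (fun Z => Z \in U /\ _)).
exists (\sum_i (sg i * (koszul X Y (b i) / 2)) *: b i); split.
  by apply: rpred_sum => i _; apply/rpredZ/b_mem.
move=> W WU; rewrite -/(koszul X Y W) {2}(b_expand WU) (scal_sum (koszul_scalarr X Y)).
rewrite gm_suml mulr_sumr; apply: eq_bigr => i _.
by rewrite gmZl (scalZ (koszul_scalarr X Y)) gmC; field.
Qed.

Lemma lc_nabla_mem X Y : nabla X Y \in U.
Proof. by case: (lc_nabla_spec X Y). Qed.

Lemma lc_nabla_koszul X Y W : W \in U -> gm (nabla X Y) W = koszul X Y W / 2.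
Proof. by case: (lc_nabla_spec X Y) => _ /[apply] <-; field. Qed.

Lemma lc_nabla_unique X Y Z : Z \in U ->
  (forall i, 2 * gm Z (b i) = koszul X Y (b i)) -> nabla X Y = Z.
Proof.
move=> ZU Zb; apply/eqP; rewrite -subr_eq0; apply/eqP/onb_nondeg.
  by rewrite rpredB ?lc_nabla_mem.
have lin_2Z : scalar (fun W => 2 * gm Z W).
  by move=> c x y; rewrite gmDr gmZr; ring.
move=> W WU; rewrite gmBl lc_nabla_koszul //.
rewrite -(onb_scalar_eq lin_2Z (koszul_scalarr X Y) Zb WU); by field.
Qed.

Lemma lc_nabla_linearl Y : linear (nabla^~ Y).
Proof.
move=> c X X'; apply: lc_nabla_unique => [|i].
  by rewrite rpredD ?rpredZ ?lc_nabla_mem.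
rewrite gmDl gmZl !lc_nabla_koszul // (koszul_scalarl Y (b i)); by field.
Qed.

Lemma lc_nabla_linearr X : linear (nabla X).
Proof.
move=> c Y Y'; apply: lc_nabla_unique => [|i].
  by rewrite rpredD ?rpredZ ?lc_nabla_mem.
rewrite gmDl gmZl !lc_nabla_koszul // (koszul_scalarm X (b i)); by field.
Qed.

Lemma lc_curv_linear Y Z : linear (fun X => lc_curv br gm U X Y Z).
Proof.
move=> c X X'; rewrite /lc_curv (lc_nabla_linearl (nabla Y Z)) (lc_nabla_linearl Z).
rewrite (lc_nabla_linearr Y) brDl brZl (lc_nabla_linearl Z).
by rewrite !scalerBr !opprD !addrA [LHS](ACl (1*3*5*2*4*6)).
Qed.

Lemma ricci_onb Y Z : ricci br gm U Y Z = onb_trace (fun X => lc_curv br gm U X Y Z).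
Proof.
apply: vtrace_onb; first exact: lc_curv_linear.
by move=> X _; rewrite /lc_curv !rpredB ?lc_nabla_mem.
Qed.

End OrthonormalExpansion.

Section LowerCentralSeries.
Variable g : {vspace V}.
Hypothesis ideal_g : lie_ideal br g.

Lemma linear_span_mem (D : V -> V) (X : seq V) (W : {vspace V}) x : linear D ->
  x \in <<X>>%VS -> (forall y, y \in X -> D y \in W) -> D x \in W.
Proof.
move=> lin_D xX DX; rewrite (coord_span (X := in_tuple X) xX) (lin_sum lin_D).
by apply: rpred_sum => i _; rewrite (linZ lin_D) rpredZ // DX // mem_nth.
Qed.

Lemma bracket_span_mem (U W : {vspace V}) x y :
  x \in U -> y \in W -> br x y \in bracket_span br U W.
Proof.
move=> /coord_vbasis -> /coord_vbasis ->; rewrite br_suml.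
apply: rpred_sum => i _; rewrite brZl br_sumr; apply/rpredZ/rpred_sum => j _.
by rewrite brZr; apply/rpredZ/memv_span/allpairs_f; apply: mem_nth; rewrite size_tuple.
Qed.

Lemma bracket_span_sub (U W Z : {vspace V}) :
  (forall x y, x \in U -> y \in W -> br x y \in Z) -> (bracket_span br U W <= Z)%VS.
Proof.
move=> UWZ; apply/span_subvP => z /allpairsP [[x y] [/= xU yW ->]].
by apply: UWZ; apply: vbasis_mem.
Qed.

Definition lcs j := iter j (bracket_span br g) g.

Lemma lcs_sub j : (lcs j <= g)%VS.
Proof.
case: j => [|j]; first exact: subvv.
by rewrite /lcs iterS; apply: bracket_span_sub => x y xg _; apply: ideal_g.
Qed.

Lemma lcs_decr j : (lcs j.+1 <= lcs j)%VS.
Proof.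
elim: j => [|j IHj]; first exact: lcs_sub.
rewrite /lcs iterS; apply: bracket_span_sub => x y xg yC.
exact/bracket_span_mem/(subvP IHj).
Qed.

Lemma derivation_lcs (D : V -> V) : linear D -> (forall x, x \in g -> D x \in g) ->
  (forall x z, x \in g -> z \in g -> D (br x z) = br (D x) z + br x (D z)) ->
  forall j x, x \in lcs j -> D x \in lcs j.
Proof.
move=> lin_D Dg D_der; elim=> [|j IHj] x //=; first exact: Dg.
move=> xC; apply: (linear_span_mem lin_D xC) => _ /allpairsP [[x0 y0] [/= x0s y0s ->]].
have x0g := vbasis_mem x0s; have y0C := vbasis_mem y0s.
have y0g := subvP (lcs_sub j) _ y0C.
by rewrite D_der // rpredD // bracket_span_mem // ?Dg ?IHj.
Qed.

Lemma vtrace_derivation_ad (D : V -> V) y : linear D ->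
  (forall j x, x \in lcs j -> D x \in lcs j) ->
  nilpotent_lie br g -> y \in g -> vtrace g (fun x => D (br y x)) = 0.
Proof.
move=> lin_D D_lcs [n lcs_n] yg.
have lin_Dad : linear (fun x => D (br y x)).
  by move=> c x z; rewrite brDr brZr lin_D.
suff trace_lcs j : vtrace g (fun x => D (br y x)) = vtrace (lcs j) (fun x => D (br y x)).
  by rewrite (trace_lcs n) /lcs lcs_n vtrace0.
elim: j => [//|j ->]; apply: vtrace_subv => //; first exact: lcs_decr.
by move=> x xC; apply/D_lcs/bracket_span_mem.
Qed.

End LowerCentralSeries.

Section StandardDecomposition.
Variables (g a : {vspace V})
  (k : nat) (e : k.-tuple V) (eps : 'I_k -> R)
  (m : nat) (u : m.-tuple V) (eta : 'I_m -> R).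
Hypotheses (ideal_g : lie_ideal br g) (abelian_a : abelian_subalgebra br a)
  (g_plus_a : (g + a)%VS = fullv)
  (g_perp_a : forall v w, v \in g -> w \in a -> gm v w = 0)
  (basis_e : basis_of a e) (eps_sign : forall s, eps s = 1 \/ eps s = -1)
  (gram_e : forall s r, gm (tnth e s) (tnth e r) = if s == r then eps s else 0)
  (basis_u : basis_of g u) (eta_sign : forall i, eta i = 1 \/ eta i = -1)
  (gram_u : forall i j, gm (tnth u i) (tnth u j) = if i == j then eta i else 0).

Local Notation e_ s := (tnth e s).
Local Notation u_ i := (tnth u i).
Local Notation phi s v := (br v (tnth e s)).
Local Notation nablaF := (lc_nabla br gm fullv).
Local Notation nablaG := (lc_nabla br gm g).
Local Notation trace_g := (onb_trace (tnth u) eta).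
Local Notation dot_g := (onb_dot (tnth u) eta).

Let onb_g : onb_expansion g (tnth u) eta.
Proof. exact: onb_expansion_basis. Qed.
Let onb_a : onb_expansion a (tnth e) eps.
Proof. exact: onb_expansion_basis. Qed.
Let onb_full : onb_expansion fullv (fam_sum (tnth u) (tnth e)) (fam_sum eta eps).
Proof. by rewrite -g_plus_a; apply: onb_expansion_addv. Qed.

Let u_mem i : u_ i \in g. Proof. by case: onb_g. Qed.
Let e_mem s : e_ s \in a. Proof. by case: onb_a. Qed.
Let gm_ge v s : v \in g -> gm v (e_ s) = 0. Proof. by move=> vg; apply: g_perp_a vg (e_mem s). Qed.
Let gm_eg v s : v \in g -> gm (e_ s) v = 0. Proof. by move=> vg; rewrite gmC gm_ge. Qed.
Let br_gl x y : x \in g -> br x y \in g. Proof. exact: ideal_g. Qed.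
Let br_gr x y : y \in g -> br x y \in g.
Proof. by move=> yg; rewrite brC rpredN br_gl. Qed.
Let br_ee s r : br (e_ s) (e_ r) = 0. Proof. exact: abelian_a (e_mem s) (e_mem r). Qed.
Let br_eg s x : br (e_ s) x = - phi s x. Proof. exact: brC. Qed.

Let nablaG_mem X Y : nablaG X Y \in g. Proof. exact: lc_nabla_mem onb_g X Y. Qed.
Let nablaG_koszul X Y W : W \in g -> gm (nablaG X Y) W = koszul X Y W / 2.
Proof. exact: lc_nabla_koszul onb_g X Y W. Qed.
Let nablaF_koszul X Y W : gm (nablaF X Y) W = koszul X Y W / 2.
Proof. exact: lc_nabla_koszul onb_full X Y W (memvf W). Qed.

(* The statement's phis is only constrained on g; this everywhere defined linear
   adjoint replaces it (phi_starE). *)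
Definition phi_star s := onb_adj (tnth u) eta (fun v => phi s v).
Definition phi_sym s x := 2^-1 *: (phi s x + phi_star s x).

Let phi_star_mem s x : phi_star s x \in g. Proof. exact: onb_adj_mem. Qed.
Let phi_star_linear s : linear (phi_star s). Proof. exact: onb_adj_linear. Qed.
Let phi_linear s : linear (fun x => phi s x). Proof. exact: br_linearl. Qed.

Lemma gm_phi_star s v w : v \in g -> gm v (phi_star s w) = gm (phi s v) w.
Proof. exact/gm_onb_adj/phi_linear. Qed.
Lemma gm_phi_starl s v w : v \in g -> gm (phi_star s w) v = gm (phi s v) w.
Proof. by move=> vg; rewrite gmC gm_phi_star. Qed.

Lemma phi_sym_mem s x : x \in g -> phi_sym s x \in g.
Proof. by move=> xg; rewrite rpredZ // rpredD ?br_gl. Qed.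
Lemma phi_sym_linear s : linear (phi_sym s).
Proof.
move=> c x y; rewrite /phi_sym brDl brZl (phi_star_linear s) scalerA mulrC.
by rewrite addrACA -(scalerDr c) [2^-1 *: _]scalerDr scalerA.
Qed.
Lemma phi_sym_adj s x y : x \in g -> y \in g -> gm (phi_sym s x) y = gm x (phi_sym s y).
Proof.
move=> xg yg; rewrite /phi_sym gmZl gmZr gmDl gmDr gm_phi_starl // gm_phi_star //.
by rewrite (gmC x (phi s y)) addrC.
Qed.

Lemma phi_starE (phis : 'I_k -> V -> V) s v :
  (forall v, v \in g -> phis s v \in g) ->
  (forall v w, v \in g -> w \in g -> gm (phi s v) w = gm v (phis s w)) ->
  v \in g -> phis s v = phi_star s v.
Proof. exact: onb_adj_unique onb_g _ _ _. Qed.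

Lemma nablaF_eq X Y Z : (forall W, W \in g -> 2 * gm Z W = koszul X Y W) ->
  (forall t, 2 * gm Z (e_ t) = koszul X Y (e_ t)) -> nablaF X Y = Z.
Proof. by move=> Zg Ze; apply: (lc_nabla_unique onb_full (memvf Z)) => -[i|t] /=; [apply: Zg|]. Qed.

Lemma gm_phi_sym s X Y : Y \in g ->
  gm (phi_sym s X) Y = 2^-1 * (gm (phi s X) Y + gm (phi s Y) X).
Proof. by move=> Yg; rewrite gmZl gmDl gm_phi_starl. Qed.

Lemma gm_sum_e_g (c : 'I_k -> R) W : W \in g -> gm (\sum_s c s *: e_ s) W = 0.
Proof. by move=> Wg; rewrite gm_suml big1 // => s _; rewrite gmZl gm_eg // mulr0. Qed.

Lemma gm_sum_e (c : 'I_k -> R) t : gm (\sum_s c s *: e_ s) (e_ t) = c t * eps t.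
Proof.
rewrite gm_suml (bigD1 t) //= big1 => [|s st]; last by rewrite gmZl gram_e (negPf st) mulr0.
by rewrite gmZl gram_e eqxx addr0.
Qed.

Let eps2 s : eps s * eps s = 1.
Proof. by case: (eps_sign s) => ->; rewrite ?mulrNN mulr1. Qed.

Lemma nabla_gg X Y : X \in g -> Y \in g ->
  nablaF X Y = nablaG X Y - \sum_s (eps s * gm (phi_sym s X) Y) *: e_ s.
Proof.
move=> Xg Yg; apply: nablaF_eq => [W Wg|t].
  by rewrite gmBl gm_sum_e_g // subr0 nablaG_koszul //; field.
rewrite gmBl gm_sum_e gm_ge // /koszul gm_ge ?br_gl // br_eg gmNl.
by rewrite gm_phi_sym // mulrAC eps2 mul1r; field.
Qed.

Lemma nabla_ge X s : X \in g -> nablaF X (e_ s) = phi_sym s X.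
Proof.
move=> Xg; apply: nablaF_eq => [W Wg|t].
  by rewrite gm_phi_sym // /koszul br_eg gmNl (gm_ge _ (br_gr _ Xg)); field.
rewrite gm_ge ?phi_sym_mem // /koszul br_ee gm0l gm_ge ?br_gl // gm_ge ?br_gr //.
by rewrite subr0 addr0 mulr0.
Qed.

Lemma nabla_eg s X : X \in g -> nablaF (e_ s) X = 2^-1 *: (phi_star s X - phi s X).
Proof.
move=> Xg; apply: nablaF_eq => [W Wg|t].
  by rewrite gmZl gmBl gm_phi_starl // /koszul br_eg gmNl (gm_ge _ (br_gl _ Xg)); field.
rewrite gmZl gmBl !gm_ge ?br_gl // /koszul br_ee gm0l gm_ge ?br_gr // gm_ge ?br_gl //.
by rewrite !subrr addr0 !mulr0.
Qed.

Lemma nabla_ee s r : nablaF (e_ s) (e_ r) = 0.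
Proof.
apply: nablaF_eq => [W Wg|t]; rewrite gm0l mulr0 /koszul br_ee gm0l.
  by rewrite br_eg gmNl gm_ge ?br_gl // gm_ge ?br_gl // oppr0 subr0 addr0.
by rewrite !br_ee !gm0l subr0 addr0.
Qed.

Lemma nablaF_diag X Y : gm (nablaF X Y) X = gm (br X Y) X.
Proof. by rewrite nablaF_koszul koszul_diag; field. Qed.

Lemma nablaF_nablaG X Y W : W \in g -> gm (nablaF X Y) W = gm (nablaG X Y) W.
Proof. by move=> Wg; rewrite nablaF_koszul nablaG_koszul. Qed.

Lemma nablaG_diag X Y : X \in g -> gm (nablaG X Y) X = gm (br X Y) X.
Proof. by move=> Xg; rewrite nablaG_koszul // koszul_diag; field. Qed.

Let trace_gE f : linear f -> (forall x, x \in g -> f x \in g) -> vtrace g f = trace_g f.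
Proof. exact: vtrace_onb onb_g f. Qed.

Lemma ricci_fullE Y Z : ricci br gm fullv Y Z =
  trace_g (fun X => lc_curv br gm fullv X Y Z) +
  \sum_t eps t * gm (lc_curv br gm fullv (e_ t) Y Z) (e_ t).
Proof. by rewrite (ricci_onb onb_full) /onb_trace big_sumType. Qed.

Lemma ricci_gE Y Z : ricci br gm g Y Z = trace_g (fun X => lc_curv br gm g X Y Z).
Proof. exact: ricci_onb onb_g Y Z. Qed.

Lemma gauss_equation X v w : X \in g -> v \in g -> w \in g ->
  gm (lc_curv br gm fullv X v w) X = gm (lc_curv br gm g X v w) X +
  \sum_s eps s * (gm (phi_sym s v) X * gm (phi_sym s w) X
                   - gm (phi_sym s v) w * gm (phi s X) X).
Proof.
move=> Xg vg wg.
have nabla_X_nabla_vw : gm (nablaF X (nablaF v w)) X =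
    gm (nablaG X (nablaG v w)) X - \sum_s eps s * gm (phi_sym s v) w * gm (phi s X) X.
  rewrite nablaF_diag nabla_gg // brBr gmBl nablaG_diag // br_sumr gm_suml.
  by congr (_ - _); apply: eq_bigr => s _; rewrite brZr gmZl.
have nabla_v_nabla_Xw : gm (nablaF v (nablaF X w)) X =
    gm (nablaG v (nablaG X w)) X - \sum_s eps s * gm (phi_sym s X) w * gm (phi_sym s v) X.
  have lin_v := lc_nabla_linearr onb_full v.
  rewrite (nabla_gg Xg wg) (linB lin_v) (lin_sum lin_v) gmBl nablaF_nablaG // gm_suml.
  by congr (_ - _); apply: eq_bigr => s _; rewrite (linZ lin_v) nabla_ge // gmZl.
rewrite /lc_curv !gmBl nabla_X_nabla_vw nabla_v_nabla_Xw nablaF_nablaG //.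
have -> : \sum_s eps s * (gm (phi_sym s v) X * gm (phi_sym s w) X
                          - gm (phi_sym s v) w * gm (phi s X) X) =
    \sum_s eps s * gm (phi_sym s X) w * gm (phi_sym s v) X
    - \sum_s eps s * gm (phi_sym s v) w * gm (phi s X) X.
  by rewrite -sumrB; apply: eq_bigr => s _; rewrite (phi_sym_adj s Xg wg) (gmC X); ring.
ring.
Qed.

Lemma curv_e_gg s v w : v \in g -> w \in g ->
  gm (lc_curv br gm fullv (e_ s) v w) (e_ s) =
  2^-1 * gm (phi s (phi_star s v) - phi_star s (phi s v)) w
  - gm (phi_sym s v) (phi_sym s w).
Proof.
move=> vg wg; have Yg : 2^-1 *: (phi_star s w - phi s w) \in g.
  by rewrite rpredZ // rpredB ?phi_star_mem ?br_gl.
rewrite /lc_curv !gmBl nablaF_diag nabla_gg // brBr br_sumr big1 => [|t _]; last first.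
  by rewrite brZr br_ee scaler0.
rewrite subr0 gm_ge ?br_gr ?nablaG_mem // nabla_eg // !nablaF_koszul /koszul.
rewrite (gm_ge _ (br_gr _ Yg)) (gm_ge _ (br_gl _ (br_gr _ vg))) !br_eg.
rewrite !(brNl, brNr, gmNl, gmNr, opprK) !(brZl, brBl, gmZl, gmZr, gmBl, gmBr).
rewrite /phi_sym !(gmZl, gmZr, gmDl, gmDr).
rewrite -(gm_phi_star s v (phi_star_mem s w)) (gmC (phi_star s w)).
rewrite !gm_phi_star ?br_gl ?phi_star_mem // !gm_phi_starl ?br_gl // !(gmC (phi s w)).
by field.
Qed.

Lemma ricci_gg v w : v \in g -> w \in g ->
  ricci br gm fullv v w = ricci br gm g v w +
  \sum_s (2^-1 * eps s * gm (phi s (phi_star s v) - phi_star s (phi s v)) w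
          - 2^-1 * eps s * gm (phi s v + phi_star s v) w * vtrace g (fun x => phi s x)).
Proof.
move=> vg wg; rewrite ricci_fullE ricci_gE /onb_trace.
rewrite (eq_bigr _ (fun i _ => congr1 (GRing.mul (eta i)) (gauss_equation (u_mem i) vg wg))).
rewrite (eq_bigr (fun i => eta i * gm (lc_curv br gm g (u_ i) v w) (u_ i) +
    \sum_s eps s * (eta i * gm (phi_sym s v) (u_ i) * gm (phi_sym s w) (u_ i)
                    - gm (phi_sym s v) w * (eta i * gm (phi s (u_ i)) (u_ i))))); last first.
  move=> i _; rewrite mulrDr mulr_sumr; congr (_ + _).
  by apply: eq_bigr => s _; ring.
rewrite big_split /= -addrA; congr (_ + _).
rewrite exchange_big -big_split /=; apply: eq_bigr => s _.
rewrite -mulr_sumr sumrB -mulr_sumr (onb_parseval onb_g) ?phi_sym_mem // curv_e_gg //.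
rewrite trace_gE => [|c x y|x]; last by apply: br_gl.
  by rewrite /onb_trace /phi_sym !gmZl; ring.
by rewrite brDl brZl.
Qed.

Let nablaF0r X : nablaF X 0 = 0. Proof. exact: lin0 (lc_nabla_linearr onb_full X). Qed.
Let nablaF0l Y : nablaF 0 Y = 0. Proof. exact: lin0 (lc_nabla_linearl onb_full Y). Qed.

Lemma curv_e_ee t s r : gm (lc_curv br gm fullv (e_ t) (e_ s) (e_ r)) (e_ t) = 0.
Proof. by rewrite /lc_curv !nabla_ee !nablaF0r br_ee nablaF0l !subr0 gm0l. Qed.

Lemma curv_g_ee X s r : X \in g -> gm (lc_curv br gm fullv X (e_ s) (e_ r)) X =
  - (3 / 2) * gm (phi_sym r X) (phi s X) + 2^-1 * gm (phi_sym r X) (phi_star s X).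
Proof.
move=> Xg; have SXg := phi_sym_mem r Xg.
rewrite /lc_curv nabla_ee nablaF0r nabla_ge // nabla_eg // nabla_ge ?br_gl //.
rewrite sub0r gmBl gmNl gmZl gmBl gm_phi_starl // -(gm_phi_star s X SXg).
by rewrite (phi_sym_adj r (br_gl _ Xg) Xg) (gmC (phi s X)); field.
Qed.

Lemma dot_phi_sym_phi s r :
  \sum_i eta i * gm (phi_sym r (u_ i)) (phi s (u_ i)) =
  2^-1 * (dot_g (fun x => phi r x) (fun x => phi s x) + trace_g (fun x => phi r (phi s x))).
Proof.
rewrite mulrDr !mulr_sumr -big_split; apply: eq_bigr => i _ /=.
by rewrite /phi_sym gmZl gmDl gm_phi_starl ?br_gl //; ring.
Qed.

Lemma dot_phi_sym_phi_star s r :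
  \sum_i eta i * gm (phi_sym r (u_ i)) (phi_star s (u_ i)) =
  2^-1 * (trace_g (fun x => phi s (phi r x)) + dot_g (fun x => phi r x) (fun x => phi s x)).
Proof.
have -> : dot_g (fun x => phi r x) (fun x => phi s x) = trace_g (fun x => phi s (phi_star r x)).
  rewrite (onb_traceC onb_g (A := fun x => phi s x) (B := phi_star r)) //.
    by apply: eq_bigr => i _; rewrite gm_phi_starl.
  by move=> x xg; apply: br_gl.
rewrite mulrDr !mulr_sumr -big_split; apply: eq_bigr => i _ /=.
by rewrite /phi_sym gmZl gmDl !gm_phi_star ?br_gl //; ring.
Qed.

Lemma ricci_ee s r : ricci br gm fullv (e_ s) (e_ r) =
  - 2^-1 * dot_g (fun x => phi s x) (fun x => phi r x)
  - 2^-1 * vtrace g (fun v => phi s (phi r v)).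
Proof.
rewrite ricci_fullE big1 ?addr0 => [|t _]; last by rewrite curv_e_ee mulr0.
rewrite /onb_trace (eq_bigr _ (fun i _ => congr1 (GRing.mul (eta i)) (curv_g_ee s r (u_mem i)))).
rewrite (eq_bigr (fun i => - (3 / 2) * (eta i * gm (phi_sym r (u_ i)) (phi s (u_ i))) +
    2^-1 * (eta i * gm (phi_sym r (u_ i)) (phi_star s (u_ i))))) => [|i _]; last by ring.
rewrite big_split /= -!mulr_sumr dot_phi_sym_phi dot_phi_sym_phi_star.
have dotC : dot_g (fun x => phi r x) (fun x => phi s x) = dot_g (fun x => phi s x) (fun x => phi r x).
  by apply: eq_bigr => i _; rewrite gmC.
rewrite dotC (onb_traceC onb_g (A := fun x => phi r x) (B := fun x => phi s x)) //.
- rewrite trace_gE; first by field.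
    by move=> c x y; rewrite !(brDl, brZl).
  by move=> x xg; apply/br_gl/br_gl.
- by move=> x; apply: br_gl.
- by move=> x; apply: br_gl.
Qed.

Lemma curv_e_ge t v s : v \in g -> gm (lc_curv br gm fullv (e_ t) v (e_ s)) (e_ t) = 0.
Proof.
move=> vg; have Svg := phi_sym_mem s vg; have tvg : br (e_ t) v \in g by apply: br_gr.
rewrite /lc_curv nabla_ge // nabla_ee nablaF0r nabla_ge // nabla_eg // subr0 gmBl.
by rewrite !gm_ge ?subrr ?phi_sym_mem // rpredZ // rpredB ?phi_star_mem ?br_gl.
Qed.

Lemma curv_g_ge X v s : X \in g -> v \in g ->
  gm (lc_curv br gm fullv X v (e_ s)) X =
  - gm (br (phi_sym s v) X) X - 2^-1 * gm (br v (phi_sym s X)) X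
  + 2^-1 * gm (br (phi_sym s X) X) v + 3 / 2 * gm (phi_sym s (br v X)) X.
Proof.
move=> Xg vg; have SXg := phi_sym_mem s Xg.
rewrite /lc_curv !nabla_ge ?br_gr // !gmBl nablaF_diag nabla_gg // gmBl gm_sum_e_g //.
rewrite subr0 nablaG_koszul // /koszul -(phi_sym_adj s (br_gr X vg) Xg).
rewrite (brC X (phi_sym s v)) [br X v]brC (linN (phi_sym_linear s)) !gmNl.
by field.
Qed.

Lemma phi_derivation s x z : phi s (br x z) = br (phi s x) z + br x (phi s z).
Proof.
have := jacobi x z (e_ s); rewrite (brC (e_ s) (br x z)) [br (e_ s) x]brC brNr.
by rewrite (brC z (phi s x)) opprK => /eqP; rewrite subr_eq0 addrC => /eqP <-.
Qed.

Section Nilpotent.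
Hypothesis nilpotent_g : nilpotent_lie br g.

Lemma trace_ad y : y \in g -> trace_g (br y) = 0.
Proof.
move=> yg; rewrite -trace_gE; first exact: (@vtrace_derivation_ad g ideal_g id).
  exact: br_linearr.
by move=> x; apply: br_gr.
Qed.

Lemma trace_phi_ad s y : y \in g -> trace_g (fun x => phi s (br y x)) = 0.
Proof.
move=> yg; rewrite -trace_gE; last by move=> x xg; apply/br_gl/br_gr.
  apply: (@vtrace_derivation_ad g ideal_g (fun v => phi s v)) => //.
  by apply: (derivation_lcs ideal_g) => [//|x|x z _ _]; [apply: br_gl | apply: phi_derivation].
by move=> c x z; rewrite brDr brZr brDl brZl.
Qed.

Lemma trace_phi_sym_ad s v : v \in g ->
  trace_g (fun x => phi_sym s (br v x)) = 2^-1 * dot_g (br v) (fun x => phi s x).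
Proof.
move=> vg; rewrite -[dot_g _ _]add0r -(trace_phi_ad s vg) mulrDr.
rewrite /onb_trace /onb_dot !mulr_sumr -big_split.
apply: eq_bigr => i _ /=; rewrite /phi_sym gmZl gmDl gm_phi_starl // (gmC (phi s (u_ i))); ring.
Qed.

Lemma ricci_ge v s : v \in g ->
  ricci br gm fullv v (e_ s) = 2^-1 * dot_g (br v) (fun x => phi s x).
Proof.
move=> vg; rewrite ricci_fullE big1 ?addr0 => [|t _]; last by rewrite curv_e_ge ?mulr0.
rewrite /onb_trace (eq_bigr _ (fun i _ => congr1 (GRing.mul (eta i)) (curv_g_ge s (u_mem i) vg))).
rewrite (eq_bigr (fun i => - (eta i * gm (br (phi_sym s v) (u_ i)) (u_ i))
    - 2^-1 * (eta i * gm (br v (phi_sym s (u_ i))) (u_ i))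
    + 2^-1 * (eta i * gm (br (phi_sym s (u_ i)) (u_ i)) v)
    + 3 / 2 * (eta i * gm (phi_sym s (br v (u_ i))) (u_ i)))) => [|i _]; last by ring.
rewrite !big_split /= !sumrN -!mulr_sumr.
have ad_Sv : \sum_i eta i * gm (br (phi_sym s v) (u_ i)) (u_ i) = 0.
  exact: trace_ad (phi_sym_mem s vg).
have br_S : \sum_i eta i * gm (br (phi_sym s (u_ i)) (u_ i)) v = 0.
  by apply: (onb_sum_br_selfadj onb_g) => [x|x y]; [apply: phi_sym_mem | apply: phi_sym_adj].
have ad_S_comm : \sum_i eta i * gm (br v (phi_sym s (u_ i))) (u_ i) =
    \sum_i eta i * gm (phi_sym s (br v (u_ i))) (u_ i).
  apply: (onb_traceC onb_g (A := br v) (B := phi_sym s)).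
  - exact: br_linearr.
  - exact: phi_sym_linear.
  - by move=> x; apply: br_gr.
  - by move=> x; apply: phi_sym_mem.
have := trace_phi_sym_ad s vg; rewrite /onb_trace => S_ad.
by rewrite ad_Sv br_S ad_S_comm S_ad; field.
Qed.

End Nilpotent.

End StandardDecomposition.

End MetricLieAlgebra.

Unset Implicit Arguments. Set Strict Implicit.

Theorem proposition1p10 (R : realType) (V : vectType R)
  (br : V -> V -> V) (gm : V -> V -> R) (g a : {vspace V})
  (k : nat) (e : k.-tuple V) (eps : 'I_k -> R)
  (phis : 'I_k -> V -> V)
  (m : nat) (u : m.-tuple V) (eta : 'I_m -> R) :
  is_lie_bracket br -> is_metric gm ->
  solvable_lie br fullv ->
  (* standard decomposition *)
  lie_ideal br g -> nilpotent_lie br g ->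
  abelian_subalgebra br a ->
  (g + a)%VS = fullv -> directv (g + a) ->
  (forall v w, v \in g -> w \in a -> gm v w = 0) ->
  (* orthonormal basis e of a *)
  basis_of a e ->
  (forall s, eps s = 1 \/ eps s = -1) ->
  (forall s r, gm (tnth e s) (tnth e r) = if s == r then eps s else 0) ->
  (* phi_s^* is the adjoint of phi_s = [., e_s] on g *)
  (forall s v, v \in g -> phis s v \in g) ->
  (forall s v w, v \in g -> w \in g ->
     gm (br v (tnth e s)) w = gm v (phis s w)) ->
  (* orthonormal basis u of g, used to define <f,g> on End(g) *)
  basis_of g u ->
  (forall i, eta i = 1 \/ eta i = -1) ->
  (forall i j, gm (tnth u i) (tnth u j) = if i == j then eta i else 0) ->
  let phi := fun (s : 'I_k) (v : V) => br v (tnth e s) in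
  let ip := fun (f h : V -> V) =>
    \sum_(i < m) eta i * gm (f (tnth u i)) (h (tnth u i)) in
  [/\ (forall v w, v \in g -> w \in g ->
        ricci br gm fullv v w =
        ricci br gm g v w +
        \sum_(s < k)
          (2^-1 * eps s * gm (phi s (phis s v) - phis s (phi s v)) w
           - 2^-1 * eps s * gm (phi s v + phis s v) w * vtrace g (phi s))),
      (forall v s, v \in g ->
        ricci br gm fullv v (tnth e s) = 2^-1 * ip (br v) (phi s)) &
      (forall s r,
        ricci br gm fullv (tnth e s) (tnth e r) =
        - 2^-1 * ip (phi s) (phi r) - 2^-1 * vtrace g (fun v => phi s (phi r v)))].
Proof.
move=> lie_br metric_gm _ ideal_g nilpotent_g abelian_a g_plus_a _ g_perp_a
  basis_e eps_sign gram_e phis_g phis_adj basis_u eta_sign gram_u phi ip.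
split=> [v w vg wg | v s vg | s r].
- rewrite (ricci_gg lie_br metric_gm ideal_g abelian_a g_plus_a g_perp_a
    basis_e eps_sign gram_e basis_u eta_sign gram_u vg wg).
  congr (_ + _); apply: eq_bigr => s _.
  have phisE := phi_starE metric_gm basis_u eta_sign gram_u (phis_g s) (phis_adj s).
  by rewrite /phi !phisE ?ideal_g.
- exact: (ricci_ge lie_br metric_gm ideal_g abelian_a g_plus_a g_perp_a
    basis_e eps_sign gram_e basis_u eta_sign gram_u nilpotent_g s vg).
- exact: (ricci_ee lie_br metric_gm ideal_g abelian_a g_plus_a g_perp_a
    basis_e eps_sign gram_e basis_u eta_sign gram_u s r).
Qed.
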